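(* The algorithm HashNWalk (with a single summary) takes $O(|e|+\min(M,|e|)^2)$ time to process a hyperedge $e$.
   Context: Input: a stream of hyperedges $(e_i,t_i)$, each $e_i$ a nonempty subset of a node set $V$ with timestamp $t_i$; parameters: number of supernodes $M$, time-decay $\alpha\in(0,1)$. A hash function $h:V\to\{1,\dots,M\}$ evaluable in $O(1)$ time is fixed. The algorithm maintains $S\in\mathbb{R}^{M\times M}$ and $T\in\mathbb{R}^M$, initialized to zero. Processing hyperedge $e$ arriving at time $t$ consists of: (i) computing the sparse vector $m(e)\in\mathbb{Z}^M$, $m_k(e)=\sum_{v\in e}\mathds{1}(h(v)=k)$, and $\tilde e=\{k:m_k(e)>0\}$; (ii) updating, for all $u,v$, $S_{uv}\leftarrow S_{uv}+\alpha^{-t}\mathds{1}(u\in\tilde e)m_v(e)/|e|$ and $T_u\leftarrow T_u+\alpha^{-t}\mathds{1}(u\in\tilde e)$ (only entries with $u,v\in\tilde e$ change); (iii) computing the two anomaly scores $\mathsf{score_U}(e)$ and $\mathsf{score_B}(e)$, where $\mathsf{score}(e)=\mathsf{aggregate}_{u,v\in\tilde e}\big(d_{u,t}^{\beta}\log(a_{uv}/s_{uv})\big)$ with $a_{uv}=m_v(e)/|e|$, $s_{uv}=\tilde P_{uv}=S_{uv}/T_u$ (the summary just before $t$), $d_{u,t}$ the maintained number of occurrences of supernode $u$ at time $t$; $\mathsf{score_U}$ uses $\beta=0$ and $\mathsf{aggregate}=\max$, and $\mathsf{score_B}$ uses $\beta=1$ and $\mathsf{aggregate}=$ mean over all ordered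 pairs. The computational model is the RAM model with $O(1)$-time arithmetic (including $\log$ and powers) and $O(1)$-time sparse vector/hash table operations. *)

(* A cost-instrumented model of the RAM-model execution of
   HashNWalk's per-hyperedge processing.  Every elementary RAM operation
   (O(1) arithmetic incl. log/power, one hash evaluation, one hash-table
   lookup or update) is wrapped in [op], which charges exactly 1 unit;
   every loop iteration additionally charges 1 unit ([forC]). *)
From Stdlib Require Import Reals List Arith Lia.
Import ListNotations.

Definition C (A : Type) : Type := (A * nat)%type.
Definition ret {A} (x : A) : C A := (x, 0%nat).
Definition op {A} (x : A) : C A := (x, 1%nat).
Definition bind {A B} (m : C A) (f : A -> C B) : C B :=
  let (x, c1) := m in let (y, c2) := f x in (y, (c1 + c2)%nat).
Notation "x <- m ;; k" := (bind m (fun x => k))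
  (at level 61, m at next level, right associativity).

Fixpoint forC {A B} (l : list A) (acc : B) (body : B -> A -> C B) : C B :=
  match l with
  | [] => ret acc
  | x :: l' => _ <- op tt ;; acc' <- body acc x ;; forC l' acc' body
  end.

(* hash tables with default values, modelled functionally; an update is one
   O(1) hash-table operation (charged via [op] at the call site). *)
Definition upd {V} (f : nat -> V) (k : nat) (v : V) : nat -> V :=
  fun k' => if Nat.eqb k' k then v else f k'.
Definition upd2 {V} (f : nat -> nat -> V) (u w : nat) (v : V) : nat -> nat -> V :=
  fun u' w' => if andb (Nat.eqb u' u) (Nat.eqb w' w) then v else f u' w'.

(* Maintained summary: S (M x M, sparse), T (length M), and occurrence
   counts d of supernodes. *)
Record State := mkState {
  S_ : nat -> nat -> R;
  T_ : nat -> R;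
  D_ : nat -> R }.

Definition init_state : State := mkState (fun _ _ => 0%R) (fun _ => 0%R) (fun _ => 0%R).

(* Processing of one hyperedge e (list of distinct nodes) arriving at time t.
   Returns the new state and (score_U, score_B), together with the number of
   elementary operations performed. *)
Definition process (M : nat) (alpha : R) (h : nat -> nat) (st : State)
    (e : list nat) (t : R) : C (State * (R * R)) :=
  (* (i) sparse vector m(e), its support e~ (list of keys), |e~|, and |e| *)
  p <- forC e ((fun _ => 0%nat), @nil nat, 0%nat, 0%nat)
        (fun '(m, keys, nk, sz) v =>
           k <- op (h v) ;;
           mk <- op (m k) ;;
           keys' <- op (if Nat.eqb mk 0 then k :: keys else keys) ;;
           nk' <- op (if Nat.eqb mk 0 then S nk else nk) ;;
           m' <- op (upd m k (S mk)) ;;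
           sz' <- op (S sz) ;;
           ret (m', keys', nk', sz')) ;;
  let '(m, et, nk, sz) := p in
  w <- op (Rpower alpha (- t)) ;;
  D' <- forC et (D_ st) (fun D u => du <- op (D u) ;; op (upd D u (du + 1)%R)) ;;
  (* (iii) scores, using the summary S,T just before t *)
  sc <- forC et (@None R, 0%R) (fun acc u =>
          forC et acc (fun '(mx, sm) v =>
            Suv <- op (S_ st u v) ;;
            Tu <- op (T_ st u) ;;
            mv <- op (m v) ;;
            du <- op (D' u) ;;
            a <- op (INR mv / INR sz)%R ;;
            s <- op (Suv / Tu)%R ;;
            l <- op (ln (a / s)) ;;
            mx' <- op (match mx with None => Some l | Some x => Some (Rmax x l) end) ;;
            sm' <- op (sm + du * l)%R ;;
            ret (mx', sm'))) ;;
  let '(mx, sm) := sc in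
  scoreU <- op (match mx with None => 0%R | Some x => x end) ;;
  scoreB <- op (sm / (INR nk * INR nk))%R ;;
  ST <- forC et (S_ st, T_ st) (fun '(Sa, Ta) u =>
          tu <- op (Ta u) ;;
          Ta' <- op (upd Ta u (tu + w)%R) ;;
          Sa' <- forC et Sa (fun Sa v =>
                   suv <- op (Sa u v) ;;
                   mv <- op (m v) ;;
                   op (upd2 Sa u v (suv + w * INR mv / INR sz)%R)) ;;
          ret (Sa', Ta')) ;;
  ret (mkState (fst ST) (snd ST) D', (scoreU, scoreB)).

Definition process_time M alpha h st e t : nat := snd (process M alpha h st e t).

From Pilot Require Import Defs.
From Stdlib Require Import Reals List Lia.
Import ListNotations.

(* Every loop of [process] runs over e or over the support ẽ of m(e), nested
   at most two deep over ẽ, with bodies of constant cost.  Hence the cost is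
   exactly 7|e| + 3 + 7|ẽ| + 14|ẽ|^2, and |ẽ| <= min(M, |e|) because ẽ is a
   duplicate-free list of hash values of nodes of e, all lying in {1..M}. *)

Lemma cost_bind {A B} (m : Defs.C A) (f : A -> Defs.C B) :
  snd (bind m f) = (snd m + snd (f (fst m)))%nat.
Proof. destruct m as [x c]; simpl; destruct (f x); reflexivity. Qed.

Lemma forC_cost {A B} (l : list A) (acc : B) (body : B -> A -> Defs.C B) (b : nat) :
  (forall a x, snd (body a x) = b) -> snd (forC l acc body) = (length l * S b)%nat.
Proof.
  intros Hb; revert acc; induction l as [|x l IH]; intros acc; [reflexivity|].
  cbn [forC]; rewrite !cost_bind, Hb, IH; cbn [length snd op]; lia.
Qed.

Lemma forC_ind {A B} (P : list A -> B -> Prop) (l : list A) (acc : B)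
    (body : B -> A -> Defs.C B) :
  P [] acc -> (forall p a x, P p a -> P (p ++ [x]) (fst (body a x))) ->
  P l (fst (forC l acc body)).
Proof.
  intros H0 Hstep.
  enough (G : forall p acc, P p acc -> P (p ++ l) (fst (forC l acc body)))
    by exact (G [] acc H0).
  induction l as [|x l IH]; intros p a Hp; cbn [forC].
  - rewrite app_nil_r; exact Hp.
  - specialize (Hstep p a x Hp); destruct (body a x) as [a' c]; cbn [fst] in Hstep.
    specialize (IH (p ++ [x]) a' Hstep); rewrite <- app_assoc in IH.
    cbn [bind op]; destruct (forC l a' body); exact IH.
Qed.

Local Notation tally_acc := ((nat -> nat) * list nat * nat * nat)%type.

(* The first loop of [process], copied verbatim so that [fold] recognises it. *)
Definition tally_step (h : nat -> nat) : tally_acc -> nat -> Defs.C tally_acc :=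
  fun '(m, keys, nk, sz) v =>
    k <- op (h v) ;;
    mk <- op (m k) ;;
    keys' <- op (if Nat.eqb mk 0 then k :: keys else keys) ;;
    nk' <- op (if Nat.eqb mk 0 then S nk else nk) ;;
    m' <- op (upd m k (S mk)) ;;
    sz' <- op (S sz) ;;
    ret (m', keys', nk', sz').

Definition tally (h : nat -> nat) (e : list nat) : Defs.C tally_acc :=
  forC e ((fun _ => 0%nat), @nil nat, 0%nat, 0%nat) (tally_step h).

Definition support (h : nat -> nat) (e : list nat) : list nat :=
  let '(_, keys, _, _) := fst (tally h e) in keys.

Lemma tally_cost h e : snd (tally h e) = (7 * length e)%nat.
Proof.
  unfold tally; rewrite (forC_cost _ _ _ 6) by (intros [[[m keys] nk] sz] v; reflexivity).
  lia.
Qed.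

Definition tally_inv (h : nat -> nat) (p : list nat) (acc : tally_acc) : Prop :=
  let '(m, keys, _, _) := acc in
  NoDup keys /\ (forall k, In k keys -> m k <> 0%nat) /\ incl keys (map h p).

Lemma tally_step_inv h p acc x :
  tally_inv h p acc -> tally_inv h (p ++ [x]) (fst (tally_step h acc x)).
Proof.
  destruct acc as [[[m keys] nk] sz]; intros [Hnd [Hpos Hincl]]; cbn.
  assert (Hhx : In (h x) (map h (p ++ [x])))
    by (apply in_map, in_or_app; right; left; reflexivity).
  assert (Hgrow : incl keys (map h (p ++ [x])))
    by (intros k Hk; rewrite map_app; apply in_or_app; left; apply Hincl, Hk).
  assert (Hupd : forall k, m k <> 0%nat -> upd m (h x) (S (m (h x))) k <> 0%nat)
    by (intros k Hk; unfold upd; destruct (Nat.eqb k (h x)); easy).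
  destruct (Nat.eqb_spec (m (h x)) 0) as [Hz | Hnz].
  - split; [|split].
    + constructor; [intros Hin; exact (Hpos _ Hin Hz) | exact Hnd].
    + intros k [<- | Hk]; [unfold upd; rewrite Nat.eqb_refl; easy | apply Hupd, Hpos, Hk].
    + intros k [<- | Hk]; [exact Hhx | apply Hgrow, Hk].
  - repeat split; [exact Hnd | intros k Hk; apply Hupd, Hpos, Hk | exact Hgrow].
Qed.

Lemma support_NoDup_incl h e :
  NoDup (support h e) /\ incl (support h e) (map h e).
Proof.
  assert (Inv : tally_inv h e (fst (tally h e))).
  { unfold tally; apply forC_ind; [|exact (tally_step_inv h)].
    split; [constructor | split; intros k []]. }
  unfold support; destruct (fst (tally h e)) as [[[m keys] nk] sz].
  destruct Inv as [Hnd [_ Hincl]]; split; assumption.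
Qed.

Lemma support_length_le M h e :
  (forall v, 1 <= h v <= M)%nat -> (length (support h e) <= Nat.min M (length e))%nat.
Proof.
  intros Hh; destruct (support_NoDup_incl h e) as [Hnd Hincl].
  apply Nat.min_glb.
  - rewrite <- (length_seq M 1); apply (NoDup_incl_length Hnd).
    intros k Hk; apply Hincl, in_map_iff in Hk as [v [<- _]].
    apply in_seq; specialize (Hh v); lia.
  - rewrite <- (length_map h e); exact (NoDup_incl_length Hnd Hincl).
Qed.

Lemma process_time_eq M alpha h st e t :
  let k := length (support h e) in
  process_time M alpha h st e t = (7 * length e + 3 + 7 * k + 14 * k * k)%nat.
Proof.
  unfold process_time, process; fold (tally_step h); fold (tally h e).
  rewrite cost_bind, tally_cost; unfold support.
  destruct (fst (tally h e)) as [[[m keys] nk] sz]; cbn beta iota.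
  rewrite !cost_bind; cbn beta iota.
  rewrite (forC_cost keys (D_ st) _ 2) by reflexivity.
  rewrite (forC_cost keys (None, 0%R) _ (length keys * 10))
    by (intros; apply forC_cost; intros [mx sm] v; reflexivity).
  destruct (fst (forC keys (None, 0%R) _)) as [mx sm].
  rewrite !cost_bind; cbn beta iota.
  rewrite (forC_cost keys (S_ st, T_ st) _ (2 + length keys * 4)).
  - cbn; lia.
  - intros [Sa Ta] u; rewrite !cost_bind; cbn beta iota.
    rewrite (forC_cost _ _ _ 3) by reflexivity.
    cbn; lia.
Qed.

Theorem theorem1 :
  exists c : nat,
    forall (M : nat) (alpha : R) (h : nat -> nat) (st : State)
           (e : list nat) (t : R),
      (1 <= M)%nat ->
      (0 < alpha < 1)%R ->
      (forall v, 1 <= h v <= M)%nat ->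
      e <> [] ->
      NoDup e ->
      (process_time M alpha h st e t
         <= c * (length e + Nat.min M (length e) ^ 2))%nat.
Proof.
  (* 7|e| + 3 + 7k + 14k^2 <= 24 (|e| + k^2) since |e| >= 1 and k <= k^2 *)
  exists 24%nat; intros M alpha h st e t _ _ Hh Hne _.
  rewrite process_time_eq.
  pose proof (support_length_le M h e Hh) as Hk.
  assert (He : (1 <= length e)%nat) by (destruct e; [congruence | cbn; lia]).
  set (k := length (support h e)) in *; set (n := Nat.min M (length e)) in *.
  assert (Hkk : (k * k <= n ^ 2)%nat) by (cbn; nia).
  nia.
Qed.
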